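(* Let $\eta>0$, $n\ge1$, $b\in\{1,\dots,n\}$. Let $X_n=(x_1,\dots,x_n)$ and $\hat X_n=(\hat x_1,\dots,\hat x_n)$ with $x_i=(a_i,y_i)$, $\hat x_i=(\hat a_i,\hat y_i)\in\mathcal{X}\subseteq\mathbb{R}^d\times\mathbb{R}$, differing in at most one index, and assume $\sup_{x\in\mathcal{X}}\Vert x\Vert\le D<\infty$. Let $(\Omega_k)_{k\ge1}$ be i.i.d. uniformly random subsets of $\{1,\dots,n\}$ of cardinality $b$, $H_k=\sum_{i\in\Omega_k}a_ia_i^\top$, $q_k=\sum_{i\in\Omega_k}a_iy_i$, $\hat H_k=\sum_{i\in\Omega_k}\hat a_i\hat a_i^\top$, $\hat q_k=\sum_{i\in\Omega_k}\hat a_i\hat y_i$, and consider $$\theta_k=\left(I-\tfrac{\eta}{b}H_k\right)\theta_{k-1}+\tfrac{\eta}{b}q_k,\qquad\hat\theta_k=\left(I-\tfrac{\eta}{b}\hat H_k\right)\hat\theta_{k-1}+\tfrac{\eta}{b}\hat q_k,$$ with $\theta_0=\hat\theta_0=\theta\in\mathbb{R}^d$. Assume $\rho:=\mathbb{E}\Vert I-\frac{\eta}{b}H_1\Vert<1$ and $\hat\rho:=\mathbb{E}\Vert I-\frac{\eta}{b}\hat H_1\Vert<1$. Let $\nu_k,\hat\nu_k$ be the laws of $\theta_k,\hat\theta_k$. Then for every $k$, $$\mathcal{W}_1(\nu_k,\hat\nu_k)\le\frac{1-\rho^k}{1-\rho}\cdot\frac{2\eta D^2}{n}\max\left\{1+\Vert\theta\Vert,\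 \frac{1-\hat\rho+\frac{\eta}{b}\mathbb{E}\Vert\hat q_1\Vert}{1-\hat\rho}\right\}.$$
   Context: This is minibatch SGD for the quadratic loss $f(\theta,(a,y))=(a^\top\theta-y)^2/2$ on two datasets differing in at most one point. Matrix norms are operator norms; $\mathcal{W}_1$ is the 1-Wasserstein distance. *)

From HB Require Import structures.
From mathcomp Require Import all_boot all_order all_algebra.
From mathcomp Require Import classical_sets reals.
Set Implicit Arguments. Unset Strict Implicit. Unset Printing Implicit Defensive.
Import Order.TTheory GRing.Theory Num.Theory.
Local Open Scope ring_scope.
Local Open Scope classical_set_scope.

Section Defs.
Variable R : realType.

Definition vnorm (d : nat) (v : 'cV[R]_d) : R := Num.sqrt (\sum_i v i 0 ^+ 2).

Definition pnorm (d : nat) (x : 'cV[R]_d * R) : R :=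
  Num.sqrt (\sum_i x.1 i 0 ^+ 2 + x.2 ^+ 2).

Definition opnorm (d : nat) (M : 'M[R]_d) : R :=
  sup [set vnorm (M *m v) | v in [set v : 'cV[R]_d | vnorm v <= 1]].

Definition Hmat (n d : nat) (a : 'I_n -> 'cV[R]_d) (A : {set 'I_n}) : 'M[R]_d :=
  \sum_(i in A) a i *m (a i)^T.
Definition qvec (n d : nat) (a : 'I_n -> 'cV[R]_d) (y : 'I_n -> R)
    (A : {set 'I_n}) : 'cV[R]_d :=
  \sum_(i in A) y i *: a i.

Definition sgd_step (n d b : nat) (eta : R) (a : 'I_n -> 'cV[R]_d) (y : 'I_n -> R)
    (th : 'cV[R]_d) (A : {set 'I_n}) : 'cV[R]_d :=
  (1%:M - (eta / b%:R) *: Hmat a A) *m th + (eta / b%:R) *: qvec a y A.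
Definition sgd_iter (n d b : nat) (eta : R) (a : 'I_n -> 'cV[R]_d) (y : 'I_n -> R)
    (th0 : 'cV[R]_d) (s : seq {set 'I_n}) : 'cV[R]_d :=
  foldl (sgd_step b eta a y) th0 s.

(* theta_k as a function of the minibatch sample (Omega_1, ..., Omega_k) *)
Definition theta_k (n d b k : nat) (eta : R) (a : 'I_n -> 'cV[R]_d) (y : 'I_n -> R)
    (th0 : 'cV[R]_d) (om : {ffun 'I_k -> {set 'I_n}}) : 'cV[R]_d :=
  sgd_iter b eta a y th0 (codom om).

Definition nbatches (n b : nat) : nat := #|[set A : {set 'I_n} | #|A| == b]|.

Definition Ebatch (n b : nat) (f : {set 'I_n} -> R) : R :=
  (nbatches n b)%:R^-1 * \sum_(A : {set 'I_n} | #|A| == b) f A.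

Definition sample_prob (n b k : nat) (om : {ffun 'I_k -> {set 'I_n}}) : R :=
  if [forall i, #|om i| == b] then ((nbatches n b)%:R ^- k) else 0.

(* 1-Wasserstein distance between the laws of X (under weights p on I) and
   of Y (under weights q on J): infimum of the transport cost over all
   couplings.  Since the laws are finitely supported pushforwards, couplings
   of the laws correspond to couplings of the index spaces. *)
Definition W1fin (d : nat) (I J : finType) (p : I -> R) (X : I -> 'cV[R]_d)
    (q : J -> R) (Y : J -> 'cV[R]_d) : R :=
  inf [set c | exists pi : I -> J -> R,
     [/\ forall i j, 0 <= pi i j,
         forall i, \sum_j pi i j = p i,
         forall j, \sum_i pi i j = q j &
         c = \sum_i \sum_j pi i j * vnorm (X i - Y j)]].

End Defs.

From HB Require Import structures.
From mathcomp Require Import all_boot all_order all_algebra perm.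
From mathcomp Require Import classical_sets reals boolp.
From mathcomp Require Import ring lra.
Import Order.TTheory GRing.Theory Num.Theory.
Local Open Scope ring_scope.
Local Open Scope classical_set_scope.
Set Implicit Arguments. Unset Strict Implicit. Unset Printing Implicit Defensive.

(* Run both chains on the same minibatches: this coupling gives
   W1 <= E|theta_k - thetah_k|.  One step contracts the distance by
   E|I - (eta/b) H| = rho, up to the perturbation
   (eta/b) (|(Hh - H) thetah| + |q - qh|), which vanishes unless the batch
   contains the index where the data differ (probability b/n) and is at most
   2 D^2 (1 + |thetah|) otherwise.  The same one-step bound for the second
   chain alone keeps 1 + E|thetah_k| below the max, so the expected distance
   e_k satisfies e_(k+1) <= rho e_k + (2 eta D^2 / n) max{...}; unrolling from
   e_0 = 0 gives the geometric factor. *)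

Lemma sqr_sum_mul_le (R : realFieldType) (I : finType) (x z : I -> R) :
  (\sum_i x i * z i) ^+ 2 <= (\sum_i x i ^+ 2) * (\sum_i z i ^+ 2).
Proof.
have lagrange : \sum_i \sum_j (x i * z j - x j * z i) ^+ 2 =
    2 * ((\sum_i x i ^+ 2) * (\sum_i z i ^+ 2) - (\sum_i x i * z i) ^+ 2).
  have sqrE i j : (x i * z j - x j * z i) ^+ 2 =
      x i ^+ 2 * z j ^+ 2 + z i ^+ 2 * x j ^+ 2 - 2 * (x i * z i) * (x j * z j).
    by ring.
  under eq_bigr do under eq_bigr do rewrite sqrE.
  under eq_bigr do rewrite sumrB big_split /=.
  rewrite sumrB big_split /= -!big_distrlr /= -mulr_sumr; ring.
have : 0 <= \sum_i \sum_j (x i * z j - x j * z i) ^+ 2.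
  by apply: sumr_ge0 => i _; apply: sumr_ge0 => j _; exact: sqr_ge0.
rewrite lagrange; lra.
Qed.

Lemma sqrtr_le (R : rcfType) (x y : R) : 0 <= y -> x <= y ^+ 2 -> Num.sqrt x <= y.
Proof. by move=> y0 /ler_wsqrtr; rewrite sqrtr_sqr ger0_norm. Qed.

Section Euclidean.
Variables (R : realType) (d : nat).
Implicit Types (u v : 'cV[R]_d) (M : 'M[R]_d).

Definition dotv u v : R := \sum_i u i 0 * v i 0.

Lemma vnorm_ge0 v : 0 <= vnorm v.
Proof. exact: sqrtr_ge0. Qed.

Lemma vnorm_sqr v : vnorm v ^+ 2 = \sum_i v i 0 ^+ 2.
Proof. by rewrite sqr_sqrtr // sumr_ge0 // => i _; exact: sqr_ge0. Qed.

Lemma vnorm0 : vnorm (0 : 'cV[R]_d) = 0.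
Proof. by rewrite /vnorm big1 ?sqrtr0 // => i _; rewrite mxE expr0n. Qed.

Lemma vnormZ (c : R) v : vnorm (c *: v) = `|c| * vnorm v.
Proof.
rewrite /vnorm -sqrtr_sqr -sqrtrM ?sqr_ge0 // mulr_sumr.
by congr Num.sqrt; apply: eq_bigr => i _; rewrite mxE exprMn.
Qed.

Lemma vnormN v : vnorm (- v) = vnorm v.
Proof. by rewrite -scaleN1r vnormZ normrN normr1 mul1r. Qed.

Lemma norm_dotv_le u v : `|dotv u v| <= vnorm u * vnorm v.
Proof.
rewrite -(ler_pXn2r (n := 2)) // ?nnegrE ?mulr_ge0 ?vnorm_ge0 //.
by rewrite real_normK ?num_real // exprMn !vnorm_sqr; exact: sqr_sum_mul_le.
Qed.

Lemma vnormD u v : vnorm (u + v) <= vnorm u + vnorm v.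
Proof.
apply: sqrtr_le; first by rewrite addr_ge0 ?vnorm_ge0.
have -> : \sum_i (u + v) i 0 ^+ 2 = vnorm u ^+ 2 + vnorm v ^+ 2 + 2 * dotv u v.
  rewrite !vnorm_sqr /dotv mulr_sumr -!big_split /=.
  by apply: eq_bigr => i _; rewrite mxE; ring.
have := norm_dotv_le u v; have := ler_norm (dotv u v); nra.
Qed.

Lemma vnormB_le u v : vnorm (u - v) <= vnorm u + vnorm v.
Proof. by rewrite -(vnormN v) vnormD. Qed.

Definition frobnorm M : R := Num.sqrt (\sum_i \sum_j M i j ^+ 2).

Lemma vnorm_mulmx_frobnorm M v : vnorm (M *m v) <= frobnorm M * vnorm v.
Proof.
apply: sqrtr_le; first by rewrite mulr_ge0 ?vnorm_ge0 ?sqrtr_ge0.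
rewrite exprMn vnorm_sqr sqr_sqrtr; last first.
  by apply: sumr_ge0 => i _; apply: sumr_ge0 => j _; exact: sqr_ge0.
rewrite big_distrl /=; apply: ler_sum => i _; rewrite mxE.
exact: (sqr_sum_mul_le (fun j => M i j) (fun j => v j 0)).
Qed.

Lemma opnorm_has_ubound M :
  has_ubound [set vnorm (M *m v) | v in [set v : 'cV[R]_d | vnorm v <= 1]].
Proof.
exists (frobnorm M) => _ [v /= v_le1 <-].
apply: le_trans (vnorm_mulmx_frobnorm M v) _.
by rewrite -[leRHS]mulr1 ler_wpM2l // sqrtr_ge0.
Qed.

Lemma opnorm_ge0 M : 0 <= opnorm M.
Proof.
apply: ub_le_sup (opnorm_has_ubound M) _ _.
by exists 0; rewrite /= ?mulmx0 vnorm0.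
Qed.

Lemma vnorm_mulmx_opnorm M v : vnorm (M *m v) <= opnorm M * vnorm v.
Proof.
have [v0|v_neq0] := eqVneq (vnorm v) 0.
  by have := vnorm_mulmx_frobnorm M v; rewrite v0 !mulr0.
have v_gt0 : 0 < vnorm v by rewrite lt_def v_neq0 vnorm_ge0.
have unit_le : vnorm (M *m ((vnorm v)^-1 *: v)) <= opnorm M.
  apply: ub_le_sup (opnorm_has_ubound M) _ _; exists ((vnorm v)^-1 *: v) => //=.
  by rewrite vnormZ ger0_norm ?invr_ge0 ?vnorm_ge0 // mulVf.
rewrite -scalemxAr vnormZ ger0_norm ?invr_ge0 ?vnorm_ge0 // in unit_le.
by rewrite -ler_pdivrMr // mulrC.
Qed.

Lemma mulmx_outer u v : u *m u^T *m v = dotv u v *: u.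
Proof.
rewrite -mulmxA (mx11_scalar (u^T *m v)) mul_mx_scalar; congr (_ *: _).
by rewrite mxE; apply: eq_bigr => i _; rewrite mxE.
Qed.

Lemma W1fin_le_diag (I : finType) (p : I -> R) (X Y : I -> 'cV[R]_d) :
  (forall i, 0 <= p i) -> W1fin p X p Y <= \sum_i p i * vnorm (X i - Y i).
Proof.
move=> p_ge0; apply: ge_inf.
  exists 0 => _ [pi [pi_ge0 _ _ ->]].
  by apply: sumr_ge0 => i _; apply: sumr_ge0 => j _; rewrite mulr_ge0 ?vnorm_ge0.
exists (fun i j => if i == j then p i else 0); split.
- by move=> i j; case: eqP.
- by move=> i; rewrite (bigD1 i) //= eqxx big1 ?addr0 // => j /negPf; rewrite eq_sym => ->.
- by move=> j; rewrite (bigD1 j) //= eqxx big1 ?addr0 // => i /negPf ->.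
- apply: eq_bigr => i _; rewrite (bigD1 i) //= eqxx big1 ?addr0 // => j.
  by rewrite eq_sym => /negPf ->; rewrite mul0r.
Qed.

End Euclidean.

Lemma pnorm_sqr_ge0 (R : realType) d (x : 'cV[R]_d * R) :
  0 <= \sum_i x.1 i 0 ^+ 2 + x.2 ^+ 2.
Proof. by rewrite addr_ge0 ?sqr_ge0 // sumr_ge0 // => i _; exact: sqr_ge0. Qed.

Lemma vnorm_le_pnorm (R : realType) d (x : 'cV[R]_d * R) : vnorm x.1 <= pnorm x.
Proof. by rewrite ler_sqrt ?pnorm_sqr_ge0 // lerDl sqr_ge0. Qed.

Lemma norm_le_pnorm (R : realType) d (x : 'cV[R]_d * R) : `|x.2| <= pnorm x.
Proof.
rewrite -sqrtr_sqr ler_sqrt ?pnorm_sqr_ge0 // lerDr.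
by rewrite sumr_ge0 // => i _; exact: sqr_ge0.
Qed.

Section Batches.
Variables (R : realType) (n b : nat).
Hypothesis b_le_n : (b <= n)%N.
Implicit Types (f g : {set 'I_n} -> R) (A : {set 'I_n}).

Lemma nbatchesE : nbatches n b = #|[set A : {set 'I_n} | #|A| == b]%SET|.
Proof. by apply: eq_card => A; rewrite inE /= /in_set /=; exact: asboolb. Qed.

Lemma nbatches_gt0 : (0 < nbatches n b)%N.
Proof. by rewrite nbatchesE card_draws card_ord bin_gt0. Qed.

Lemma Ebatch_const (c : R) : @Ebatch R n b (fun=> c) = c.
Proof.
rewrite /Ebatch (eq_bigl (mem [set A : {set 'I_n} | #|A| == b]%SET)); last first.
  by move=> A; rewrite !inE.
rewrite sumr_const -nbatchesE -[c *+ _]mulr_natr mulrCA mulVf ?mulr1 //.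
by rewrite pnatr_eq0 -lt0n nbatches_gt0.
Qed.

Lemma ler_Ebatch f g : (forall A, #|A| = b -> f A <= g A) -> Ebatch b f <= Ebatch b g.
Proof.
move=> fg; rewrite /Ebatch ler_wpM2l ?invr_ge0 ?ler0n //.
by apply: ler_sum => A /eqP; exact: fg.
Qed.

Lemma eq_Ebatch f g : (forall A, #|A| = b -> f A = g A) -> Ebatch b f = Ebatch b g.
Proof.
by move=> fg; apply/le_anti; rewrite !ler_Ebatch // => A /fg ->.
Qed.

Lemma Ebatch_ge0 f : (forall A, 0 <= f A) -> 0 <= Ebatch b f.
Proof. by move=> f_ge0; rewrite /Ebatch mulr_ge0 ?invr_ge0 ?ler0n ?sumr_ge0. Qed.

Lemma EbatchD f g : Ebatch b (fun A => f A + g A) = Ebatch b f + Ebatch b g.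
Proof. by rewrite /Ebatch big_split mulrDr. Qed.

Lemma EbatchZl (c : R) f : Ebatch b (fun A => c * f A) = c * Ebatch b f.
Proof. by rewrite /Ebatch -mulr_sumr mulrCA. Qed.

Lemma EbatchZr (c : R) f : Ebatch b (fun A => f A * c) = Ebatch b f * c.
Proof. by rewrite /Ebatch -mulrA mulr_suml. Qed.

Lemma Ebatch_sum (I : finType) (F : I -> {set 'I_n} -> R) :
  Ebatch b (fun A => \sum_i F i A) = \sum_i Ebatch b (F i).
Proof. by rewrite /Ebatch exchange_big mulr_sumr. Qed.

Lemma Ebatch_mem_tperm (j j' : 'I_n) :
  Ebatch b (fun A => (j \in A)%:R : R) = Ebatch b (fun A => (j' \in A)%:R : R).
Proof.
have tperm_inj : injective (fun A : {set 'I_n} => tperm j j' @: A).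
  exact/imset_inj/perm_inj.
rewrite /Ebatch (reindex_inj tperm_inj) /=; congr (_ * _); apply: eq_big => A.
  by rewrite card_imset //; exact: perm_inj.
by move=> _; rewrite -{1}(tpermR j j') mem_imset //; exact: perm_inj.
Qed.

Lemma Ebatch_mem (j : 'I_n) : Ebatch b (fun A => (j \in A)%:R : R) = b%:R / n%:R.
Proof.
have n_neq0 : n%:R != 0 :> R by rewrite pnatr_eq0 -lt0n (leq_ltn_trans _ (ltn_ord j)).
have sum_mem : \sum_(i < n) Ebatch b (fun A => (i \in A)%:R : R) = b%:R.
  rewrite -Ebatch_sum -[RHS]Ebatch_const; apply: eq_Ebatch => A <-.
  rewrite -sum1_card natr_sum [RHS]big_mkcond /=.
  by apply: eq_bigr => i _; case: (i \in A).
rewrite (eq_bigr _ (fun i _ => Ebatch_mem_tperm i j)) sumr_const card_ord in sum_mem.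
by rewrite -sum_mem -[X in X / _]mulr_natr mulfK.
Qed.

End Batches.

Section FfunRcons.
Variables (T : Type) (k : nat).

Definition ffun_rcons (f : {ffun 'I_k -> T}) (x : T) : {ffun 'I_k.+1 -> T} :=
  [ffun i => if unlift ord_max i is Some j then f j else x].

Lemma ffun_rcons_max f x : ffun_rcons f x ord_max = x.
Proof. by rewrite ffunE unlift_none. Qed.

Lemma ffun_rcons_lift f x j : ffun_rcons f x (lift ord_max j) = f j.
Proof. by rewrite ffunE liftK. Qed.

Lemma ffun_rcons_widen f x j : ffun_rcons f x (widen_ord (leqnSn k) j) = f j.
Proof.
have -> : widen_ord (leqnSn k) j = lift ord_max j by apply: val_inj; rewrite [RHS]lift_max.
exact: ffun_rcons_lift.
Qed.

Lemma codom_ffun_rcons f x : codom (ffun_rcons f x) = rcons (codom f) x.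
Proof.
rewrite !codomE enum_ordSr map_rcons ffun_rcons_max -map_comp; congr rcons.
by apply: eq_map => j /=; rewrite ffun_rcons_widen.
Qed.

Lemma ffun_rcons_bij : bijective (fun p : {ffun 'I_k -> T} * T => ffun_rcons p.1 p.2).
Proof.
exists (fun g : {ffun 'I_k.+1 -> T} => ([ffun j => g (lift ord_max j)], g ord_max)).
  move=> [f x] /=; rewrite ffun_rcons_max; congr pair.
  by apply/ffunP => j; rewrite ffunE ffun_rcons_lift.
move=> g; apply/ffunP => i; rewrite ffunE.
by case: unliftP => [j ->|->]; rewrite ?ffunE.
Qed.

End FfunRcons.

Section Samples.
Variables (R : realType) (n b : nat).
Hypothesis b_le_n : (b <= n)%N.

Definition Esample k (F : {ffun 'I_k -> {set 'I_n}} -> R) : R :=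
  \sum_om sample_prob R b om * F om.

Definition batch_weight (A : {set 'I_n}) : R :=
  if #|A| == b then (nbatches n b)%:R^-1 else 0.

Lemma Ebatch_weight (f : {set 'I_n} -> R) :
  Ebatch b f = \sum_A batch_weight A * f A.
Proof.
rewrite /Ebatch mulr_sumr big_mkcond /=; apply: eq_bigr => A _.
by rewrite /batch_weight; case: ifP; rewrite ?mul0r.
Qed.

Lemma sample_probE k (om : {ffun 'I_k -> {set 'I_n}}) :
  sample_prob R b om = \prod_i batch_weight (om i).
Proof.
rewrite /sample_prob /batch_weight; case: ifPn => [/forallP all_b | /forallPn[i /negPf not_b]].
  rewrite (eq_bigr (fun=> (nbatches n b)%:R^-1)) => [|i _]; last by rewrite all_b.
  by rewrite prodr_const card_ord exprVn.
by rewrite (bigD1 i) //= not_b mul0r.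
Qed.

Lemma sample_prob_ge0 k (om : {ffun 'I_k -> {set 'I_n}}) : 0 <= sample_prob R b om.
Proof. by rewrite /sample_prob; case: ifP; rewrite ?invr_ge0 ?exprn_ge0. Qed.

Lemma sample_prob_rcons k (om : {ffun 'I_k -> {set 'I_n}}) A :
  sample_prob R b (ffun_rcons om A) = sample_prob R b om * batch_weight A.
Proof.
rewrite !sample_probE big_ord_recr /= ffun_rcons_max; congr (_ * _).
by apply: eq_bigr => j _; rewrite ffun_rcons_widen.
Qed.

Lemma Esample_rcons k (G : seq {set 'I_n} -> R) :
  Esample (fun om : {ffun 'I_k.+1 -> _} => G (codom om)) =
  Esample (fun om : {ffun 'I_k -> _} => Ebatch b (fun A => G (rcons (codom om) A))).
Proof.
rewrite /Esample (reindex _ (onW_bij _ (@ffun_rcons_bij _ k))) /=.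
rewrite -(pair_bigA _ (fun om A => sample_prob R b (ffun_rcons om A) *
                                   G (codom (ffun_rcons om A)))) /=.
apply: eq_bigr => om _; rewrite Ebatch_weight mulr_sumr; apply: eq_bigr => A _.
by rewrite sample_prob_rcons codom_ffun_rcons mulrA.
Qed.

Lemma ler_Esample k (F G : {ffun 'I_k -> {set 'I_n}} -> R) :
  (forall om, F om <= G om) -> Esample F <= Esample G.
Proof. by move=> FG; apply: ler_sum => om _; rewrite ler_wpM2l ?sample_prob_ge0. Qed.

Lemma EsampleD k (F G : {ffun 'I_k -> {set 'I_n}} -> R) :
  Esample (fun om => F om + G om) = Esample F + Esample G.
Proof. by rewrite /Esample -big_split; apply: eq_bigr => om _; rewrite mulrDr. Qed.

Lemma EsampleZl k (c : R) (F : {ffun 'I_k -> {set 'I_n}} -> R) :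
  Esample (fun om => c * F om) = c * Esample F.
Proof. by rewrite /Esample mulr_sumr; apply: eq_bigr => om _; rewrite mulrCA. Qed.

Lemma Esample_const k (c : R) : Esample (fun _ : {ffun 'I_k -> {set 'I_n}} => c) = c.
Proof.
elim: k => [|k IH]; last by rewrite (Esample_rcons _ (fun=> c)) Ebatch_const.
rewrite /Esample (big_pred1 (ffun0 (card_ord 0))) => [|om]; last first.
  by symmetry; apply/eqP/ffunP => -[].
rewrite /sample_prob; case: forallP => [_|[]]; last by case.
by rewrite expr0 invr1 mul1r.
Qed.

Lemma Esample_nil (G : seq {set 'I_n} -> R) :
  Esample (fun om : {ffun 'I_0 -> {set 'I_n}} => G (codom om)) = G [::].
Proof.
rewrite -(Esample_const 0 (G [::])); apply: eq_bigr => om _.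
by have /size0nil -> : size (codom om) = 0%N by rewrite size_codom card_ord.
Qed.

End Samples.

Lemma sumrB_except (V : zmodType) (I : finType) (P : {pred I}) (F G : I -> V) (j : I) :
  (forall i, i != j -> F i = G i) ->
  \sum_(i in P) F i - \sum_(i in P) G i = (F j - G j) *+ (j \in P).
Proof.
move=> FG; rewrite -sumrB; case: (boolP (j \in P)) => jP.
  by rewrite (bigD1 j) //= big1 ?addr0 // => i /andP[_ /FG ->]; rewrite subrr.
rewrite big1 // => i iP; rewrite FG ?subrr //.
by apply: contraNneq jP => <-.
Qed.

Section SGDStep.
Variables (R : realType) (n d b : nat) (eta : R).
Hypothesis eta_ge0 : 0 <= eta.
Implicit Types (a : 'I_n -> 'cV[R]_d) (y : 'I_n -> R) (A : {set 'I_n}) (th : 'cV[R]_d).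

Lemma sgd_iter_rcons a y th s A :
  sgd_iter b eta a y th (rcons s A) = sgd_step b eta a y (sgd_iter b eta a y th s) A.
Proof. exact: foldl_rcons. Qed.

Lemma vnorm_sgd_step a y th A :
  vnorm (sgd_step b eta a y th A) <=
  opnorm (1%:M - (eta / b%:R) *: Hmat a A) * vnorm th + eta / b%:R * vnorm (qvec a y A).
Proof.
apply: le_trans (vnormD _ _) _.
by rewrite vnormZ ger0_norm ?divr_ge0 ?ler0n // lerD2r vnorm_mulmx_opnorm.
Qed.

Lemma vnorm_sgd_step_sub a ah y yh th th' A :
  vnorm (sgd_step b eta a y th A - sgd_step b eta ah yh th' A) <=
  opnorm (1%:M - (eta / b%:R) *: Hmat a A) * vnorm (th - th') +
  eta / b%:R * (vnorm ((Hmat ah A - Hmat a A) *m th') + vnorm (qvec a y A - qvec ah yh A)).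
Proof.
set c := eta / b%:R; set P := 1%:M - c *: Hmat a A.
have P'E : 1%:M - c *: Hmat ah A = P - c *: (Hmat ah A - Hmat a A).
  by rewrite /P scalerBr opprB addrA subrK.
have -> : sgd_step b eta a y th A - sgd_step b eta ah yh th' A =
    P *m (th - th') + c *: ((Hmat ah A - Hmat a A) *m th' + (qvec a y A - qvec ah yh A)).
  rewrite /sgd_step -/c -/P P'E; clearbody P.
  rewrite mulmxBl mulmxBr -scalemxAl.
  by apply/matrixP => i k; rewrite !mxE; ring.
apply: le_trans (vnormD _ _) _; rewrite vnormZ ger0_norm ?divr_ge0 ?ler0n //.
by apply: lerD; [exact: vnorm_mulmx_opnorm | rewrite ler_wpM2l ?divr_ge0 ?ler0n ?vnormD].
Qed.

Lemma sgd_perturbation_le a ah y yh (j : 'I_n) (D : R) A th :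
  (forall i, i != j -> a i = ah i /\ y i = yh i) ->
  vnorm (a j) <= D -> vnorm (ah j) <= D -> `|y j| <= D -> `|yh j| <= D ->
  vnorm ((Hmat ah A - Hmat a A) *m th) + vnorm (qvec a y A - qvec ah yh A)
    <= (j \in A)%:R * (2 * D ^+ 2 * (1 + vnorm th)).
Proof.
move=> agree aD ahD yD yhD.
have D_ge0 : 0 <= D := le_trans (vnorm_ge0 _) aD.
have HE : Hmat ah A - Hmat a A = (ah j *m (ah j)^T - a j *m (a j)^T) *+ (j \in A).
  by apply: sumrB_except => i /agree[->].
have qE : qvec a y A - qvec ah yh A = (y j *: a j - yh j *: ah j) *+ (j \in A).
  by apply: sumrB_except => i /agree[-> ->].
rewrite HE qE; case: (j \in A); last by rewrite !mulr0n mul0mx vnorm0 addr0 mul0r.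
rewrite !mulr1n mul1r mulmxBl !mulmx_outer.
have outer_le (u : 'cV[R]_d) : vnorm u <= D -> vnorm (dotv u th *: u) <= D ^+ 2 * vnorm th.
  move=> uD; rewrite vnormZ.
  apply: le_trans (ler_wpM2r (vnorm_ge0 u) (norm_dotv_le u th)) _.
  have uD2 : vnorm u ^+ 2 <= D ^+ 2 by rewrite ler_pXn2r ?nnegrE ?vnorm_ge0.
  by rewrite mulrAC -expr2 ler_wpM2r ?vnorm_ge0.
have scaled_le (c : R) (u : 'cV[R]_d) : `|c| <= D -> vnorm u <= D -> vnorm (c *: u) <= D ^+ 2.
  by move=> cD uD; rewrite vnormZ expr2 ler_pM ?normr_ge0 ?vnorm_ge0.
have := vnormB_le (dotv (ah j) th *: ah j) (dotv (a j) th *: a j).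
have := vnormB_le (y j *: a j) (yh j *: ah j).
have := outer_le _ aD; have := outer_le _ ahD.
have := scaled_le _ _ yD aD; have := scaled_le _ _ yhD ahD.
lra.
Qed.

End SGDStep.

Lemma le_recursion_invariant (R : realDomainType) (r s B : R) (u : nat -> R) :
  0 <= r -> u 0%N <= B -> r * B + s <= B -> (forall k, u k.+1 <= r * u k + s) ->
  forall k, u k <= B.
Proof.
move=> r_ge0 u0 B_inv rec; elim=> // k IH.
by apply: le_trans (rec k) (le_trans _ B_inv); rewrite lerD2r ler_wpM2l.
Qed.

Lemma le_geometric_recursion (R : realFieldType) (r s : R) (u : nat -> R) :
  0 <= r -> r != 1 -> u 0%N <= 0 -> (forall k, u k.+1 <= r * u k + s) ->
  forall k, u k <= (1 - r ^+ k) / (1 - r) * s.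
Proof.
move=> r_ge0 r_neq1 u0 rec; elim=> [|k IH]; first by rewrite expr0 subrr !mul0r.
have -> : (1 - r ^+ k.+1) / (1 - r) * s = r * ((1 - r ^+ k) / (1 - r) * s) + s.
  by rewrite exprS; field; rewrite subr_eq0 eq_sym.
by apply: le_trans (rec k) _; rewrite lerD2r ler_wpM2l.
Qed.

Section SGDChains.
Variables (R : realType) (n d b : nat) (eta : R) (th0 : 'cV[R]_d).
Hypotheses (eta_ge0 : 0 <= eta) (b_gt0 : (0 < b)%N) (b_le_n : (b <= n)%N).
Implicit Types (a : 'I_n -> 'cV[R]_d) (y : 'I_n -> R).

Definition Econtraction a : R :=
  Ebatch b (fun A => opnorm (1%:M - (eta / b%:R) *: Hmat a A)).

Lemma Econtraction_ge0 a : 0 <= Econtraction a.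
Proof. by apply: Ebatch_ge0 => A; exact: opnorm_ge0. Qed.

Lemma Esample_vnorm_theta_kS k a y :
  Esample b (fun om : {ffun 'I_k.+1 -> _} => vnorm (theta_k b eta a y th0 om)) <=
  Econtraction a * Esample b (fun om : {ffun 'I_k -> _} => vnorm (theta_k b eta a y th0 om))
  + eta / b%:R * Ebatch b (fun A => vnorm (qvec a y A)).
Proof.
rewrite /theta_k (Esample_rcons b k (fun s => vnorm (sgd_iter b eta a y th0 s))).
rewrite -EsampleZl -[X in _ <= _ + X](Esample_const b_le_n k) -EsampleD.
apply: ler_Esample => om; rewrite /Econtraction -EbatchZr -EbatchZl -EbatchD.
by apply: ler_Ebatch => A _; rewrite sgd_iter_rcons; exact: vnorm_sgd_step.
Qed.

Lemma Esample_dist_theta_kS k a ah y yh (j : 'I_n) (D : R) :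
  (forall i, i != j -> a i = ah i /\ y i = yh i) ->
  vnorm (a j) <= D -> vnorm (ah j) <= D -> `|y j| <= D -> `|yh j| <= D ->
  Esample b (fun om : {ffun 'I_k.+1 -> _} =>
    vnorm (theta_k b eta a y th0 om - theta_k b eta ah yh th0 om)) <=
  Econtraction a * Esample b (fun om : {ffun 'I_k -> _} =>
    vnorm (theta_k b eta a y th0 om - theta_k b eta ah yh th0 om))
  + 2 * eta * D ^+ 2 / n%:R *
    (1 + Esample b (fun om : {ffun 'I_k -> _} => vnorm (theta_k b eta ah yh th0 om))).
Proof.
move=> agree aD ahD yD yhD.
have b_neq0 : b%:R != 0 :> R by rewrite pnatr_eq0 -lt0n.
have n_neq0 : n%:R != 0 :> R by rewrite pnatr_eq0 -lt0n (leq_ltn_trans _ (ltn_ord j)).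
rewrite /theta_k (Esample_rcons b k (fun s =>
  vnorm (sgd_iter b eta a y th0 s - sgd_iter b eta ah yh th0 s))).
rewrite -[X in _ * (X + _)](Esample_const b_le_n k 1) -EsampleD -!EsampleZl -EsampleD.
apply: ler_Esample => om /=.
set th := sgd_iter b eta a y th0 (codom om).
set th' := sgd_iter b eta ah yh th0 (codom om).
apply: (@le_trans _ _ (Ebatch b (fun A => opnorm (1%:M - (eta / b%:R) *: Hmat a A) *
    vnorm (th - th') + eta / b%:R * ((j \in A)%:R * (2 * D ^+ 2 * (1 + vnorm th')))))).
  apply: ler_Ebatch => A _; rewrite !sgd_iter_rcons.
  apply: le_trans; first exact: vnorm_sgd_step_sub.
  by rewrite lerD2l ler_wpM2l ?divr_ge0 ?ler0n //; exact: sgd_perturbation_le.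
rewrite EbatchD EbatchZr EbatchZl EbatchZr Ebatch_mem // lerD2l.
by rewrite le_eqVlt; apply/orP; left; apply/eqP; field; apply/andP.
Qed.

Lemma Esample_vnorm_theta_k_le a y : Econtraction a < 1 ->
  forall k, 1 + Esample b (fun om : {ffun 'I_k -> _} => vnorm (theta_k b eta a y th0 om)) <=
    Num.max (1 + vnorm th0)
      ((1 - Econtraction a + eta / b%:R * Ebatch b (fun A => vnorm (qvec a y A)))
         / (1 - Econtraction a)).
Proof.
move=> rho_lt1 k; set M := Num.max _ _; rewrite addrC -lerBrDr; move: k.
apply: (le_recursion_invariant (r := Econtraction a)
  (s := eta / b%:R * Ebatch b (fun A => vnorm (qvec a y A)))
  (u := fun k => Esample b (fun om : {ffun 'I_k -> _} => vnorm (theta_k b eta a y th0 om)))).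
- exact: Econtraction_ge0.
- rewrite /= /theta_k (Esample_nil b_le_n (fun s => vnorm (sgd_iter b eta a y th0 s))).
  by rewrite lerBrDr addrC le_max lexx.
- have : (1 - Econtraction a + eta / b%:R * Ebatch b (fun A => vnorm (qvec a y A)))
           / (1 - Econtraction a) <= M by rewrite le_max lexx orbT.
  by rewrite ler_pdivrMr ?subr_gt0 //; lra.
- by move=> k; exact: Esample_vnorm_theta_kS.
Qed.

Lemma Esample_dist_theta_k_le a ah y yh (j : 'I_n) (D : R) :
  (forall i, i != j -> a i = ah i /\ y i = yh i) ->
  vnorm (a j) <= D -> vnorm (ah j) <= D -> `|y j| <= D -> `|yh j| <= D ->
  Econtraction a < 1 -> Econtraction ah < 1 ->
  forall k, Esample b (fun om : {ffun 'I_k -> _} =>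
      vnorm (theta_k b eta a y th0 om - theta_k b eta ah yh th0 om)) <=
    (1 - Econtraction a ^+ k) / (1 - Econtraction a) * (2 * eta * D ^+ 2 / n%:R) *
    Num.max (1 + vnorm th0)
      ((1 - Econtraction ah + eta / b%:R * Ebatch b (fun A => vnorm (qvec ah yh A)))
         / (1 - Econtraction ah)).
Proof.
move=> agree aD ahD yD yhD rho_lt1 rhoh_lt1 k.
set C := 2 * eta * D ^+ 2 / n%:R.
have C_ge0 : 0 <= C by rewrite divr_ge0 ?ler0n // mulr_ge0 ?sqr_ge0 // mulr_ge0 ?ler0n.
rewrite -mulrA; move: k.
apply: (le_geometric_recursion (u := fun k => Esample b (fun om : {ffun 'I_k -> _} =>
  vnorm (theta_k b eta a y th0 om - theta_k b eta ah yh th0 om)))).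
- exact: Econtraction_ge0.
- by rewrite lt_eqF.
- rewrite /= /theta_k (Esample_nil b_le_n (fun s =>
    vnorm (sgd_iter b eta a y th0 s - sgd_iter b eta ah yh th0 s))).
  by rewrite subrr vnorm0.
- move=> k; apply: le_trans (Esample_dist_theta_kS k agree aD ahD yD yhD) _.
  by rewrite lerD2l ler_wpM2l // Esample_vnorm_theta_k_le.
Qed.

End SGDChains.

Theorem theorem3p1 (R : realType) (d n b : nat) (eta D : R)
  (Xset : set ('cV[R]_d * R))
  (a ah : 'I_n -> 'cV[R]_d) (y yh : 'I_n -> R) (theta : 'cV[R]_d) :
  0 < eta -> (1 <= n)%N -> (1 <= b <= n)%N ->
  (forall x, Xset x -> pnorm x <= D) ->
  (forall i, Xset (a i, y i)) -> (forall i, Xset (ah i, yh i)) ->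
  (exists j : 'I_n, forall i, i != j -> a i = ah i /\ y i = yh i) ->
  let rho := @Ebatch R n b (fun A => opnorm (1%:M - (eta / b%:R) *: Hmat a A)) in
  let rhoh := @Ebatch R n b (fun A => opnorm (1%:M - (eta / b%:R) *: Hmat ah A)) in
  rho < 1 -> rhoh < 1 ->
  forall k : nat,
    W1fin (@sample_prob R n b k) (@theta_k R n d b k eta a y theta)
          (@sample_prob R n b k) (@theta_k R n d b k eta ah yh theta)
    <= (1 - rho ^+ k) / (1 - rho) * (2 * eta * D ^+ 2 / n%:R) *
       Num.max (1 + vnorm theta)
         ((1 - rhoh + eta / b%:R * @Ebatch R n b (fun A => vnorm (qvec ah yh A)))
            / (1 - rhoh)).
Proof.
move=> eta_gt0 _ /andP[b_gt0 b_le_n] XD aX ahX [j agree] rho rhoh rho_lt1 rhoh_lt1 k.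
apply: le_trans (W1fin_le_diag _ _ (@sample_prob_ge0 R n b k)) _.
apply: (Esample_dist_theta_k_le _ (ltW eta_gt0) b_gt0 b_le_n agree) => //.
- exact: le_trans (vnorm_le_pnorm (a j, y j)) (XD _ (aX j)).
- exact: le_trans (vnorm_le_pnorm (ah j, yh j)) (XD _ (ahX j)).
- exact: le_trans (norm_le_pnorm (a j, y j)) (XD _ (aX j)).
- exact: le_trans (norm_le_pnorm (ah j, yh j)) (XD _ (ahX j)).
Qed.
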